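(* Let $G$ be a finite, connected, simple, bridgeless, triangle-free cubic graph, and let $\Lambda$ be a valid labeling of $\mathfrak{L}_2(G)$. Then for every $\gamma\in\Gamma_\Lambda$ the projected walk $W_\gamma$ is a closed walk in $G$, and every edge of $G$ occurs in total exactly twice among the projected walks $W_\gamma$, $\gamma\in\Gamma_\Lambda$.
   Context: $\mathcal{L}(H)$ is the line graph of $H$ (vertices = edges of $H$, adjacent iff sharing an endpoint). Let $\mathcal{T}$ be the set of triangles of $\mathcal{L}(\mathcal{L}(G))$ formed by the three edges of a triangle of $\mathcal{L}(G)$. $\mathfrak{L}_2(G)$ has the vertex set of $\mathcal{L}(\mathcal{L}(G))$ and the edges of $\mathcal{L}(\mathcal{L}(G))$ not lying in any triangle of $\mathcal{T}$. For an edge $e$ of $G$, the reduced clique $\mathbb{X}_e$ is the subgraph of $\mathfrak{L}_2(G)$ on the four edges of $\mathcal{L}(G)$ incident to $e$, with all edges of $\mathfrak{L}_2(G)$ among them (a 4-cycle). A labeling $\Lambda$ gives each edge of $\mathfrak{L}_2(G)$ a label in $\{0,1\}$ ($1$ = open); it is valid if in every reduced clique each vertex is incident to two edges of that clique with different labels. $\Gamma_\Lambda$ is the set of connected components (cycles) of the subgraph formed by the open edges. Projected walk: a vertex $f$ of $\mathfrak{L}_2(G)$ is an edge of $\mathcal{L}(G)$, i.e. an unordered pair of distinct edges of $G$ sharing an endpoint. If $\gamma$ has vertices $f_1,\dots,f_m$ in cyclic order, consecutive $f_j,f_{j+1}$ (indices mod $m$) share exactly one edge $e_j$ of $G$; the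 projected walk $W_\gamma$ is the cyclic sequence $(e_1,\dots,e_m)$ of edges of $G$. *)

From mathcomp Require Import all_boot.
Set Implicit Arguments. Unset Strict Implicit. Unset Printing Implicit Defensive.

(* A finite simple graph: vertex type T : finType, adjacency g : rel T,
   symmetric and irreflexive.  Edges of G are 2-element sets {u,v} with g u v. *)
Section L2.
Variables (T : finType) (g : rel T).

Definition simple_graph := symmetric g /\ irreflexive g.

Definition cubic := forall v : T, #|[set w | g v w]| = 3.

Definition connected_graph := forall u v : T, connect g u v.

Definition triangle_free := forall u v w : T, ~~ [&& g u v, g v w & g w u].

Definition bridgeless :=
  forall u v : T, g u v ->
    connect (fun x y => g x y && ([set x; y] != [set u; v])) u v.

(* edges of G = vertices of L(G) *)
Definition isE (a : {set T}) : bool :=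
  [exists u, exists v, g u v && (a == [set u; v])].

(* edges of L(G) = vertices of L(L(G)) = vertices of frakL_2(G):
   unordered pairs of distinct edges of G sharing an endpoint *)
Definition isL2v (P : {set {set T}}) : bool :=
  [exists a, exists b,
    [&& isE a, isE b, a != b, a :&: b != set0 & P == [set a; b]]].

Definition LLadj (P Q : {set {set T}}) : bool :=
  [&& isL2v P, isL2v Q, P != Q & P :&: Q != set0].

(* P Q lies in a triangle of the family T: the three edges of a triangle
   {a,b,c} of L(G) *)
Definition inTri (P Q : {set {set T}}) : bool :=
  [exists a, exists b, exists c,
    [&& isE a, isE b, isE c, a != b, a != c, b != c,
        a :&: b != set0, a :&: c != set0, b :&: c != set0,
        P \in [set [set a; b]; [set a; c]; [set b; c]] &
        Q \in [set [set a; b]; [set a; c]; [set b; c]]]].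

Definition L2adj (P Q : {set {set T}}) : bool := LLadj P Q && ~~ inTri P Q.

(* A labeling: label of the edge {P,Q} of frakL_2(G) is lab [set P; Q]
   (true = 1 = open, false = 0). *)
Definition labeling := {set {set {set T}}} -> bool.

Definition valid (lab : labeling) :=
  forall e : {set T}, isE e ->
  forall P, isL2v P -> e \in P ->
  exists Q1 Q2, [/\ isL2v Q1 /\ e \in Q1, isL2v Q2 /\ e \in Q2,
                    L2adj P Q1, L2adj P Q2 &
                    lab [set P; Q1] != lab [set P; Q2]].

Definition openrel (lab : labeling) (P Q : {set {set T}}) : bool :=
  L2adj P Q && lab [set P; Q].

(* c lists, in cyclic order, the vertices of a connected component (a cycle)
   of the subgraph formed by the open edges *)
Definition component_cycle (lab : labeling) (c : seq {set {set T}}) :=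
  [/\ c != [::], uniq c, cycle (openrel lab) c &
      forall P Q, P \in c -> openrel lab P Q -> Q \in c].

Definition shared (P Q : {set {set T}}) : {set T} :=
  odflt set0 [pick e in P :&: Q].

Definition proj_walk (c : seq {set {set T}}) : seq {set T} :=
  [seq shared p.1 p.2 | p <- zip c (rot 1 c)].

Definition closed_walk (w : seq {set T}) :=
  exists vs : seq T, [/\ size vs = size w, cycle g vs &
     w = [seq [set p.1; p.2] | p <- zip vs (rot 1 vs)]].

End L2.

From mathcomp Require Import all_boot.
Set Implicit Arguments. Unset Strict Implicit. Unset Printing Implicit Defensive.

(* Let P = {e, a} be a vertex of L_2(G), x the common end of e and a, and e = xy.
   Three edges of G through one vertex span a triangle of L(G), whose edges are
   removed from L(L(G)); hence the neighbours of P in the reduced clique X_e are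
   the {e, yz} with z one of the two other neighbours of y, and a valid labeling
   opens exactly one of them.  So every vertex of an open cycle is entered
   through one of its two edges of G and left through the other, and consecutive
   edges of the projected walk meet in a vertex of G; by the same triangle
   argument two consecutive such vertices differ, which makes W_gamma a closed
   walk.  Each occurrence of e in W_gamma accounts for two vertices of gamma
   containing e, and the four vertices of X_e lie on exactly one cycle each. *)

Section FinsetFacts.
Variable X : finType.

Lemma set2_eq_mem (a b x y : X) :
  x \in [set a; b] -> y \in [set a; b] -> x != y -> [set a; b] = [set x; y].
Proof.
rewrite !inE => /orP[]/eqP-> /orP[]/eqP->; rewrite ?eqxx // => _.
exact: setUC.
Qed.

Lemma set2_injr (a b b' : X) : b != a -> [set a; b] = [set a; b'] -> b = b'.
Proof.
move=> nba Eb; have : b \in [set a; b'] by rewrite -Eb set22.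
by rewrite !inE (negbTE nba) => /eqP.
Qed.

Lemma setI_set2_neq0 (A : {set X}) u v :
  (A :&: [set u; v] != set0) = (u \in A) || (v \in A).
Proof.
apply/set0Pn/orP => [[t]|[uA|vA]].
- by rewrite !inE => /andP[tA /orP[]/eqP <-]; [left|right].
- by exists u; rewrite !inE uA eqxx.
- by exists v; rewrite !inE vA eqxx orbT.
Qed.

Lemma pick_mem (x0 : X) (A : {set X}) : A != set0 -> odflt x0 [pick t in A] \in A.
Proof. by case: pickP => [t tA _ //|A0 /set0Pn[t]]; rewrite A0. Qed.

Lemma mem_set2_card_le2 (A : {set X}) x y z :
  #|A| <= 2 -> x \in A -> y \in A -> x != y -> z \in A -> z \in [set x; y].
Proof.
move=> cA xA yA nxy; suff -> : A = [set x; y] by [].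
apply/eqP; rewrite eq_sym eqEcard cards2 nxy cA andbT.
by apply/subsetP => t; rewrite !inE => /orP[]/eqP->.
Qed.

Lemma count_uniq_card (s : seq X) (a : pred X) :
  uniq s -> count a s = #|[pred x in s | a x]|.
Proof.
move=> Us; rewrite -size_filter -(card_uniqP (filter_uniq a Us)).
by apply: eq_card => x; rewrite mem_filter andbC.
Qed.

End FinsetFacts.

Section CycleFacts.
Variable X : eqType.

Lemma fpath_map_belast (f : X -> X) x s : fpath f x s -> map f (belast x s) = s.
Proof. by elim: s x => //= y s IHs x /andP[/eqP-> /IHs->]. Qed.

Lemma map_next_rot1 (c : seq X) : uniq c -> map (next c) c = rot 1 c.
Proof.
move=> Uc; have := cycle_next Uc.
by case: c {Uc} => // x p /fpath_map_belast; rewrite belast_rcons rot1_cons.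
Qed.

Lemma zip_rot1 (c : seq X) : uniq c -> zip c (rot 1 c) = [seq (x, next c x) | x <- c].
Proof. by move=> Uc; rewrite -map_next_rot1 // -{1}(map_id c) zip_map. Qed.

Lemma perm_map_prev (c : seq X) : uniq c -> perm_eq (map (prev c) c) c.
Proof.
move=> Uc; apply: uniq_perm => //; first by rewrite (map_inj_uniq (can_inj (next_prev Uc))).
move=> x; apply/mapP/idP => [[y yc ->]|xc]; first by rewrite mem_prev.
by exists (next c x); rewrite ?mem_next ?prev_next.
Qed.

Lemma prev_neq_next (c : seq X) x : uniq c -> 2 < size c -> x \in c -> prev c x != next c x.
Proof.
move=> Uc Sc xc; apply: contraTneq Sc => Epn.
have nnx : next c (next c x) = x by rewrite -Epn next_prev.
case: (rot_to xc) => i s Ec; rewrite -(size_rot i) Ec.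
have : uniq (x :: s) by rewrite -Ec rot_uniq.
move: nnx; rewrite -!(next_rot i Uc) Ec.
case: s {Ec} => [|y [|z r]] //=; rewrite !inE !negb_or eqxx.
move=> + /and4P[/and3P[nxy nxz _] _ _ _].
by rewrite eq_sym (negbTE nxy) eqxx => /eqP; rewrite eq_sym (negbTE nxz).
Qed.

End CycleFacts.

Section L2Graph.
Variables (T : finType) (g : rel T).
Hypotheses (gsym : symmetric g) (girr : irreflexive g).

Lemma edge_neq u v : g u v -> u != v.
Proof. by move=> guv; apply: contraTneq guv => ->; rewrite girr. Qed.

Lemma isEP a : reflect (exists u v, g u v /\ a = [set u; v]) (isE g a).
Proof.
apply: (iffP existsP) => [[u /existsP[v /andP[guv /eqP->]]]|[u [v [guv ->]]]].
  by exists u, v.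
by exists u; apply/existsP; exists v; rewrite guv eqxx.
Qed.

Lemma isE_set2 u v : g u v -> isE g [set u; v].
Proof. by move=> guv; apply/isEP; exists u, v. Qed.

Lemma isE_other a x : isE g a -> x \in a -> exists2 y, g x y & a = [set x; y].
Proof.
case/isEP=> u [v [guv ->]]; rewrite !inE => /orP[]/eqP->; first by exists v.
by exists u; rewrite 1?gsym // setUC.
Qed.

Lemma isE_eq_set2 a u v :
  isE g a -> u \in a -> v \in a -> u != v -> g u v /\ a = [set u; v].
Proof.
case/isEP=> p [q [gpq ->]] ua va nuv; rewrite (set2_eq_mem ua va nuv); split => //.
move: ua va nuv; rewrite !inE => /orP[]/eqP-> /orP[]/eqP->; rewrite ?eqxx // => _.
by rewrite // gsym.
Qed.

Lemma isL2vP P e : isL2v g P -> e \in P ->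
  exists2 a, [/\ isE g e, isE g a, a != e & a :&: e != set0] & P = [set e; a].
Proof.
case/existsP=> a /existsP[b /and5P[Ea Eb nab iab /eqP->]].
rewrite !inE => /orP[]/eqP->; first by exists b; rewrite // eq_sym setIC.
by exists a; rewrite // setUC.
Qed.

Lemma isL2v_set2 e a :
  isE g e -> isE g a -> a != e -> a :&: e != set0 -> isL2v g [set e; a].
Proof.
move=> Ee Ea nae iae; apply/existsP; exists e; apply/existsP; exists a.
by rewrite Ee Ea eq_sym nae setIC iae eqxx.
Qed.

Lemma isL2v_set2P a b :
  a != b -> isL2v g [set a; b] -> [/\ isE g a, isE g b & a :&: b != set0].
Proof.
move=> nab /isL2vP/(_ (set21 a b))[b' [Ea Eb' _ ib'a] /set2_injr Eb].
have {}Eb : b = b' by apply: Eb; rewrite eq_sym.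
by rewrite Eb setIC.
Qed.

Lemma isL2v_eq_set2 P a b : isL2v g P -> a \in P -> b \in P -> a != b -> P = [set a; b].
Proof.
by case/existsP=> a' /existsP[b' /and5P[_ _ _ _ /eqP->]]; apply: set2_eq_mem.
Qed.

Lemma isL2v_mem_isE P e : isL2v g P -> e \in P -> isE g e.
Proof. by move=> hP /(isL2vP hP)[a []]. Qed.

Lemma sharedP P Q : LLadj g P Q -> shared P Q \in P /\ shared P Q \in Q.
Proof. by case/and4P=> _ _ _ /(pick_mem set0); rewrite inE => /andP. Qed.

Lemma L2adjC P Q : L2adj g P Q = L2adj g Q P.
Proof.
rewrite /L2adj /LLadj andbCA (eq_sym P) setIC; congr (_ && ~~ _).
by do 3!apply: eq_existsb => ?; rewrite !(andbA, andbAC _ (Q \in _)).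
Qed.

Lemma L2adj_star_free e a b x :
  L2adj g [set e; a] [set e; b] -> isE g e -> isE g a -> isE g b ->
  a != e -> b != e -> a != b -> x \in e -> x \in a -> x \notin b.
Proof.
move=> /andP[_ nT] Ee Ea Eb nae nbe nab xe xa; apply: contra nT => xb.
have meet (A B : {set T}) : x \in A -> x \in B -> A :&: B != set0.
  by move=> xA xB; apply/set0Pn; exists x; rewrite inE xA xB.
apply/existsP; exists e; apply/existsP; exists a; apply/existsP; exists b.
by rewrite Ee Ea Eb (eq_sym e a) nae (eq_sym e b) nbe nab !meet // !inE !eqxx /= orbT.
Qed.

Hypothesis cub : cubic g.

Definition edges_at x := [set a | isE g a & x \in a].

Lemma card_edges_at x : #|edges_at x| = 3.
Proof.
have -> : edges_at x = (fun y => [set x; y]) @: [set y | g x y].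
  apply/setP => a; rewrite inE; apply/andP/imsetP => [[Ea xa]|[y]].
    by case: (isE_other Ea xa) => y gxy ->; exists y; rewrite ?inE.
  by rewrite inE => gxy ->; rewrite isE_set2 // set21.
rewrite card_in_imset ?cub // => y y'; rewrite !inE => gxy _; apply: set2_injr.
by rewrite eq_sym edge_neq.
Qed.

Lemma edges_atI u v : g u v -> edges_at u :&: edges_at v = [set [set u; v]].
Proof.
move=> guv; apply/setP => a; rewrite !inE.
apply/idP/eqP => [/andP[/andP[Ea ua] /andP[_ va]]|->].
  by case: (isE_eq_set2 Ea ua va (edge_neq guv)).
by rewrite isE_set2 // set21 set22.
Qed.

Lemma card_L2v_at u v : g u v -> #|[set P | isL2v g P & [set u; v] \in P]| = 4.
Proof.
move=> guv; have Ee := isE_set2 guv.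
have -> : [set P | isL2v g P & [set u; v] \in P] =
    (fun a => [set [set u; v]; a]) @: ((edges_at u :|: edges_at v) :\ [set u; v]).
  apply/setP => P; rewrite inE; apply/andP/imsetP => [[hP eP]|[a]].
    case: (isL2vP hP eP) => a [_ Ea nae iae] ->; exists a => //.
    by rewrite !inE nae Ea /= -setI_set2_neq0.
  rewrite !inE => /andP[nae /orP[]/andP[Ea xa]] ->; (split; last exact: set21);
    by apply: isL2v_set2; rewrite // setI_set2_neq0 xa ?orbT.
rewrite card_in_imset; last by move=> a b; rewrite !inE => /andP[nae _] _ /set2_injr; apply.
have := cardsD1 [set u; v] (edges_at u :|: edges_at v).
rewrite cardsU edges_atI // cards1 !card_edges_at in_setU inE Ee set21 /=.
by case.
Qed.

Definition clique_nbrs P e := [set Q | L2adj g P Q & e \in Q].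

Lemma card_clique_nbrs P e : isL2v g P -> e \in P -> #|clique_nbrs P e| <= 2.
Proof.
move=> hP eP; case: (isL2vP hP eP) => a [Ee Ea nae /set0Pn[x]].
rewrite inE => /andP[xa xe] DP; case: (isE_other Ee xe) => y gxy De.
have nbrs_via_y : clique_nbrs P e \subset
    (fun z => [set e; [set y; z]]) @: ([set z | g y z] :\ x).
  apply/subsetP => Q; rewrite inE => /andP[PQ eQ].
  case/andP: (PQ) => /and4P[_ hQ nPQ _] _.
  case: (isL2vP hQ eQ) => b [_ Eb nbe /set0Pn[t]]; rewrite inE => /andP[tb te] DQ.
  have nab : a != b by apply: contraNneq nPQ => ab; rewrite DP DQ ab.
  have xb : x \notin b.
    by move: PQ; rewrite DP DQ => /L2adj_star_free; apply.
  have ty : t = y.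
    by move: te; rewrite De !inE => /orP[]/eqP // tx; rewrite -tx tb in xb.
  case: (isE_other Eb tb); rewrite ty => z gyz Db.
  apply/imsetP; exists z; last by rewrite DQ Db.
  by rewrite !inE gyz andbT; apply: contraNneq xb => zx; rewrite Db -zx set22.
apply: leq_trans (subset_leq_card nbrs_via_y) _; apply: leq_trans (leq_imset_card _ _) _.
have := cardsD1 x [set z | g y z]; rewrite cub !inE gsym gxy add1n.
by case=> <-.
Qed.

End L2Graph.

Section Walks.
Variable T : finType.
Implicit Types (c : seq {set {set T}}) (x : {set {set T}}).

Definition in_edge c x := shared (prev c x) x.
Definition out_edge c x := shared x (next c x).

Definition walk_vertex (v0 : T) c x := odflt v0 [pick v in in_edge c x :&: out_edge c x].

Lemma in_edge_next c x : uniq c -> in_edge c (next c x) = out_edge c x.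
Proof. by move=> Uc; rewrite /in_edge prev_next. Qed.

Lemma proj_walkE c : uniq c -> proj_walk c = [seq out_edge c x | x <- c].
Proof. by move=> Uc; rewrite /proj_walk zip_rot1 // -map_comp. Qed.

End Walks.

Section ValidLabeling.
Variables (T : finType) (g : rel T) (lab : labeling T).
Hypotheses (gsym : symmetric g) (girr : irreflexive g) (cub : cubic g).
Hypothesis lab_valid : valid g lab.
Local Notation open := (openrel g lab).

Lemma open_sym P Q : open P Q = open Q P.
Proof. by rewrite /openrel L2adjC setUC. Qed.

Lemma openP P Q : open P Q ->
  [/\ isL2v g P, isL2v g Q, P != Q, LLadj g P Q & L2adj g P Q].
Proof. by case/andP=> /[dup] PQ /andP[/[dup] LL /and4P[]]. Qed.

Lemma open_nbr_exists P e : isL2v g P -> e \in P -> exists2 Q, open P Q & e \in Q.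
Proof.
move=> hP eP; have [R1 [R2 [[_ eR1] [_ eR2] PR1 PR2]]] := lab_valid (isL2v_mem_isE hP eP) hP eP.
case l1: (lab [set P; R1]) => nl; first by exists R1; rewrite // /openrel PR1 l1.
by exists R2; rewrite // /openrel PR2; move: nl; case: (lab _).
Qed.

Lemma open_nbr_unique P e Q1 Q2 : isL2v g P -> e \in P ->
  open P Q1 -> open P Q2 -> e \in Q1 -> e \in Q2 -> Q1 = Q2.
Proof.
move=> hP eP /andP[PQ1 l1] /andP[PQ2 l2] eQ1 eQ2.
have [R1 [R2 [[_ eR1] [_ eR2] PR1 PR2 nl]]] := lab_valid (isL2v_mem_isE hP eP) hP eP.
have nR : R1 != R2 by apply: contraNneq nl => ->.
have inR Q : L2adj g P Q -> e \in Q -> Q \in [set R1; R2].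
  move=> PQ eQ; apply: (mem_set2_card_le2 (card_clique_nbrs gsym cub hP eP));
    by rewrite // inE ?PQ ?PR1 ?PR2.
move: (inR _ PQ1 eQ1) (inR _ PQ2 eQ2) nl l1 l2.
by rewrite !inE => /orP[]/eqP-> /orP[]/eqP-> // nl l1 l2; move: nl; rewrite l1 l2.
Qed.

Section Component.
Variable c : seq {set {set T}}.
Hypothesis c_comp : component_cycle g lab c.

Let Uc : uniq c. Proof. by case: c_comp. Qed.

Lemma component_open_next x : x \in c -> open x (next c x).
Proof. by case: c_comp => _ _ cyc _; apply: next_cycle. Qed.

Lemma component_open_prev x : x \in c -> open (prev c x) x.
Proof. by case: c_comp => _ _ cyc _; apply: prev_cycle. Qed.

Lemma component_L2v x : x \in c -> isL2v g x.
Proof. by move/component_open_next/openP=> []. Qed.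

Lemma component_size_gt2 : 2 < size c.
Proof.
case: c_comp => nc _ _ closed.
have [x xc] : exists x, x \in c by case: (c) nc => // x s _; exists x; rewrite mem_head.
have hx := component_L2v xc; case/existsP: (hx) => a /existsP[b /and5P[_ _ nab _ /eqP Dx]].
have [Qa xQa aQa] : exists2 Qa, open x Qa & a \in Qa by apply: open_nbr_exists; rewrite // Dx set21.
have [Qb xQb bQb] : exists2 Qb, open x Qb & b \in Qb by apply: open_nbr_exists; rewrite // Dx set22.
have [_ hQa nxQa _ _] := openP xQa; have [_ _ nxQb _ _] := openP xQb.
have nQab : Qa != Qb.
  by apply: contraNneq nxQa => Eab; rewrite Dx (isL2v_eq_set2 hQa aQa _ nab) // Eab.
apply: (uniq_leq_size (s1 := [:: x; Qa; Qb])) => [|P].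
  by rewrite /= !inE negb_or nxQa nxQb nQab.
by rewrite !inE => /or3P[]/eqP->; rewrite // (closed x).
Qed.

Lemma component_vertex x : x \in c ->
  in_edge c x != out_edge c x /\ x = [set in_edge c x; out_edge c x].
Proof.
move=> xc; have [_ hx _ LLp _] := openP (component_open_prev xc).
have [_ _ _ LLn _] := openP (component_open_next xc).
have [_ in_x] := sharedP LLp; have [out_x out_next] := sharedP LLn.
suff nio : in_edge c x != out_edge c x by split=> //; exact: isL2v_eq_set2 hx in_x out_x nio.
apply: contraNneq (prev_neq_next Uc component_size_gt2 xc) => io.
apply/eqP/(open_nbr_unique hx out_x _ (component_open_next xc) _ out_next).
  by rewrite open_sym component_open_prev.
by have := (sharedP LLp).1; rewrite -/(in_edge c x) io.
Qed.

Lemma out_edge_walk v0 x : x \in c ->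
  let w := walk_vertex v0 c in g (w x) (w (next c x)) /\ out_edge c x = [set w x; w (next c x)].
Proof.
move=> xc w; have yc : next c x \in c by rewrite mem_next.
have [n01 Dx] := component_vertex xc; have [n12 Dy] := component_vertex yc.
rewrite /w /walk_vertex in_edge_next // in n12 Dy *.
move: n01 n12 Dx Dy; set s0 := in_edge c x; set s1 := out_edge c x; set s2 := out_edge c _.
move=> n01 n12 Dx Dy.
have [hx hy nxy _ xy] := openP (component_open_next xc).
have [E0 E1 i01] : [/\ isE g s0, isE g s1 & s0 :&: s1 != set0] by apply: isL2v_set2P; rewrite -?Dx.
have [_ E2 i12] : [/\ isE g s1, isE g s2 & s1 :&: s2 != set0] by apply: isL2v_set2P; rewrite -?Dy.
move: (pick_mem v0 i01) (pick_mem v0 i12); set u := odflt v0 _; set v := odflt v0 _.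
rewrite !inE => /andP[u0 u1] /andP[v1 v2].
have n02 : s0 != s2 by apply: contraNneq nxy => e02; rewrite Dy Dx e02 setUC.
apply: isE_eq_set2 => //; apply: contraTneq v2 => uv.
move: xy; rewrite Dy Dx setUC -uv => /L2adj_star_free; apply=> //.
by rewrite eq_sym.
Qed.

Lemma component_closed_walk : closed_walk g (proj_walk c).
Proof.
have [x xc] : exists x, x \in c by case: c_comp; case: (c) => // x s; exists x; rewrite mem_head.
have [v0 _] : exists v0 : T, true.
  have [_ Dx] := component_vertex xc; have inx : in_edge c x \in x by rewrite {2}Dx set21.
  by case/isEP: (isL2v_mem_isE (component_L2v xc) inx) => v0 _; exists v0.
exists (map (walk_vertex v0 c) c); split.
- by rewrite size_map /proj_walk size_map size_zip size_rot minnn.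
- by rewrite cycle_map; apply: (cycle_from_next Uc) => y /(out_edge_walk v0) [].
rewrite proj_walkE // -map_rot -map_next_rot1 // -map_comp zip_map -map_comp.
by apply/eq_in_map => y /(out_edge_walk v0) [].
Qed.

Lemma count_component_edge (e : {set T}) :
  count (fun x : {set {set T}} => e \in x) c = 2 * count (pred1 e) (proj_walk c).
Proof.
have out_in : count (fun x => out_edge c x == e) c = count (fun x => in_edge c x == e) c.
  rewrite -(permP (perm_map_prev Uc)) count_map; apply: eq_count => x /=.
  by rewrite /out_edge next_prev.
rewrite proj_walkE // count_map mul2n -addnn {1}out_in -!sumn_count !sumnE !big_map -big_split.
apply: eq_big_seq => x /component_vertex[nio Dx] /=; rewrite {1}Dx !inE !(eq_sym e).
move: nio; case: (eqVneq (in_edge c x) e) => [->|_ _]; last by case: (_ == e).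
by rewrite [e == _]eq_sym => /negbTE->.
Qed.

End Component.

Lemma count_edge_components (cs : seq (seq {set {set T}})) e :
  (forall c, c \in cs -> component_cycle g lab c) ->
  (forall P, (exists Q, open P Q) -> count (fun c => P \in c) cs = 1) ->
  isE g e -> \sum_(c <- cs) count (pred1 e) (proj_walk c) = 2.
Proof.
move=> cs_comp cs_cover /isEP[u [v [guv De]]].
have count_flat P : count_mem P (flatten cs) = isL2v g P.
  rewrite count_flatten.
  have -> : map (count_mem P) cs = map (fun c : seq {set {set T}} => (P \in c) : nat) cs.
    by apply/eq_in_map => c /cs_comp[_ Uc _ _]; rewrite count_uniq_mem.
  rewrite sumn_count; case hP: (isL2v g P); last first.
    apply/eqP; rewrite -leqn0 leqNgt -has_count; apply/hasPn => c /cs_comp/component_L2v c_L2v.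
    by apply/negP => /c_L2v; rewrite hP.
  apply: cs_cover; case/existsP: (hP) => a /existsP[b /and5P[_ _ _ _ /eqP DP]].
  by case: (open_nbr_exists (e := a) hP); rewrite ?DP ?set21 // => Q; exists Q.
have mem_flat P : (P \in flatten cs) = isL2v g P.
  by rewrite -has_pred1 has_count count_flat; case: isL2v.
apply/eqP; rewrite -(eqn_pmul2l (isT : 0 < 2)) big_distrr /=.
under eq_big_seq => c /cs_comp c_comp do rewrite -(count_component_edge c_comp e).
have -> : \sum_(c <- cs) count (fun x : {set {set T}} => e \in x) c =
          count (fun x : {set {set T}} => e \in x) (flatten cs).
  by rewrite count_flatten sumnE big_map.
rewrite count_uniq_card; last by apply: count_mem_uniq => P; rewrite count_flat mem_flat.
rewrite -[2 * 2](card_L2v_at gsym girr cub guv) -De; apply/eqP/eq_card => P.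
by rewrite !inE mem_flat.
Qed.

End ValidLabeling.

Theorem lemma2p9 (T : finType) (g : rel T) (lab : labeling T) :
  simple_graph g -> connected_graph g -> bridgeless g ->
  triangle_free g -> cubic g -> valid g lab ->
  (forall c, component_cycle g lab c -> closed_walk g (proj_walk c)) /\
  (forall cs : seq (seq {set {set T}}),
     (forall c, c \in cs -> component_cycle g lab c) ->
     (forall P, (exists Q, openrel g lab P Q) -> count (fun c => P \in c) cs = 1) ->
     forall e, isE g e ->
       \sum_(c <- cs) count (pred1 e) (proj_walk c) = 2).
Proof.
move=> [gsym girr] _ _ _ cub lab_valid; split=> [c c_comp|cs cs_comp cs_cover e Ee].
  exact: (component_closed_walk gsym cub lab_valid c_comp).
exact: (count_edge_components gsym girr cub lab_valid cs_comp cs_cover Ee).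
Qed.
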